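(* For every $0<\epsilon<1$, $\{\Xi_{\mathrm{Sp}_{\mathrm{ap},\epsilon}},\Omega^B_{\ell^2(\mathbb{N})},\mathcal{M}_{\mathrm{H}},\Lambda_{\mathbb{N}}\}\notin\Delta_2^G$; that is, there is no sequence of general algorithms $\Gamma_n$ with $\lim_{n\to\infty}\Gamma_n(F)=\mathrm{Sp}_{\mathrm{ap},\epsilon}(\mathcal{K}_F)$ in the Hausdorff metric for every $F\in\Omega^B_{\ell^2(\mathbb{N})}$.
   Context: $\ell^2(\mathbb{N})$ is regarded as an RKHS of functions on $\mathbb{N}$ with kernel functions $\mathfrak{K}_i=e_i$ (the standard basis vectors). For $F:\mathbb{N}\to\mathbb{N}$ the Koopman operator is $\mathcal{K}_Fg=g\circ F$. $\Omega^B_{\ell^2(\mathbb{N})}$ is the set of $F:\mathbb{N}\to\mathbb{N}$ for which $\mathcal{K}_F$ is a bounded operator on all of $\ell^2(\mathbb{N})$. $\Xi_{\mathrm{Sp}_{\mathrm{ap},\epsilon}}(F)=\mathrm{Sp}_{\mathrm{ap},\epsilon}(\mathcal{K}_F)=\overline{\{z\in\mathbb{C}:\sigma_{\inf}(\mathcal{K}_F-zI)<\epsilon\}}$ where $\sigma_{\inf}(T)=\inf_{\|g\|=1}\|Tg\|$. $\mathcal{M}_{\mathrm{H}}$ is the set of nonempty compact subsets of $\mathbb{C}$ with the Hausdorff metric. $\Lambda_{\mathbb{N}}=\{F\mapsto F(j):j\in\mathbb{N}\}$. A general algorithm for a problem $\{\Xi,\Omega,\mathcal{M},\Lambda\}$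 is a map $\Gamma:\Omega\to\mathcal{M}$ such that for each $\zeta\in\Omega$ there is a nonempty finite $\Lambda_\Gamma(\zeta)\subset\Lambda$ such that whenever $\zeta'\in\Omega$ satisfies $f(\zeta')=f(\zeta)$ for all $f\in\Lambda_\Gamma(\zeta)$, then $\Lambda_\Gamma(\zeta')=\Lambda_\Gamma(\zeta)$ and $\Gamma(\zeta')=\Gamma(\zeta)$. The problem is in $\Delta_2^G$ iff there exist general algorithms $\Gamma_n$ with $\Gamma_n(\zeta)\to\Xi(\zeta)$ for all $\zeta\in\Omega$. *)

From Stdlib Require Import Reals List.
From Coquelicot Require Import Coquelicot.
Open Scope R_scope.

Definition l2 (g : nat -> C) : Prop := ex_series (fun n => (Cmod (g n)) ^ 2).
Definition l2norm (g : nat -> C) : R := sqrt (Series (fun n => (Cmod (g n)) ^ 2)).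

Definition koopman (F : nat -> nat) (g : nat -> C) : nat -> C := fun n => g (F n).

Definition OmegaB (F : nat -> nat) : Prop :=
  exists M : R, forall g, l2 g -> l2 (koopman F g) /\ l2norm (koopman F g) <= M * l2norm g.

Definition sigma_inf (F : nat -> nat) (z : C) : Rbar :=
  Glb_Rbar (fun r => exists g, l2 g /\ l2norm g = 1 /\
              r = l2norm (fun n => Cminus (koopman F g n) (Cmult z (g n)))).

Definition closureC (S : C -> Prop) : C -> Prop :=
  fun z => forall d : R, 0 < d -> exists w, S w /\ Cmod (Cminus z w) < d.

Definition SpApEps (eps : R) (F : nat -> nat) : C -> Prop :=
  closureC (fun z => Rbar_lt (sigma_inf F z) (Finite eps)).

Definition openC (U : C -> Prop) : Prop :=
  forall z, U z -> exists d : R, 0 < d /\ forall w, Cmod (Cminus w z) < d -> U w.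
Definition compactC (A : C -> Prop) : Prop :=
  forall (I : Type) (U : I -> C -> Prop),
    (forall i, openC (U i)) -> (forall z, A z -> exists i, U i z) ->
    exists l : list I, forall z, A z -> exists i, In i l /\ U i z.
Definition in_MH (A : C -> Prop) : Prop := (exists z, A z) /\ compactC A.

Definition distC (a : C) (B : C -> Prop) : R :=
  real (Glb_Rbar (fun r => exists b, B b /\ r = Cmod (Cminus a b))).
Definition hausdorff (A B : C -> Prop) : Rbar :=
  Lub_Rbar (fun r => (exists a, A a /\ r = distC a B) \/ (exists b, B b /\ r = distC b A)).
Definition hausdorff_cvg (An : nat -> C -> Prop) (A : C -> Prop) : Prop :=
  forall e : R, 0 < e -> exists N : nat, forall n, (N <= n)%nat ->
    Rbar_lt (hausdorff (An n) A) (Finite e).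

(** General algorithms for {Ξ, Ω^B, M_H, Λ_ℕ}: Λ_ℕ = {F ↦ F j : j ∈ ℕ} is
    identified with ℕ; [alg_Lam F] lists the finite nonempty set Λ_Γ(F).
    Only the behaviour on Ω^B matters. *)
Record GenAlg := {
  alg_Gam : (nat -> nat) -> C -> Prop;
  alg_Lam : (nat -> nat) -> list nat;
  alg_Lam_ne : forall F, OmegaB F -> alg_Lam F <> nil;
  alg_out : forall F, OmegaB F -> in_MH (alg_Gam F);
  alg_cons : forall F F', OmegaB F -> OmegaB F' ->
     (forall j, In j (alg_Lam F) -> F' j = F j) ->
     (forall j, In j (alg_Lam F') <-> In j (alg_Lam F)) /\
     (forall z, alg_Gam F' z <-> alg_Gam F z)
}.

From Stdlib Require Import Reals List Lia Lra FinFun IndefiniteDescription Classical_Prop.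
From Coquelicot Require Import Coquelicot.

(* The algorithms are defeated by a permutation G of ℕ built by diagonalisation, in
   stages. At stage k the permutation fixed so far on an initial segment [0, N) is
   extended to a trial map: by the identity when k is even, so that K_F is unitary and
   Sp_{ap,ε}(K_F) avoids the disc |z| < 1 - ε, or by the shift n ↦ n + 1 when k is odd,
   so that K_F kills e_N and 0 ∈ Sp_{ap,ε}(K_F). An algorithm Γ_n, with n past k and
   past the convergence index of the trial map, reads finitely many values of it; the
   next stage agrees with the trial map on all of them (for odd k the shifted block is
   closed into a cycle), so Γ_n(G) = Γ_n(trial map). With d = (1 - ε)/4, convergence at
   G then puts a point of Sp_{ap,ε}(K_G) within 2d of 0, using an odd stage, while an
   even stage keeps all of Sp_{ap,ε}(K_G) farther than 2d from 0. *)

Local Open Scope nat_scope.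

Definition supported_perm (f : nat -> nat) (N : nat) : Prop :=
  Injective f /\ Surjective f /\ forall n, N <= n -> f n = n.

Lemma supported_perm_lt f N : supported_perm f N -> forall n, n < N -> f n < N.
Proof.
  intros [Hi [_ Hid]] n Hn. apply Nat.nle_gt; intros Hge.
  assert (f (f n) = f n) as E by (apply Hid; exact Hge).
  apply Hi in E. lia.
Qed.

Definition shift_from (f : nat -> nat) (N n : nat) : nat := if n <? N then f n else S n.

(* On [N, M] this is the cycle N ↦ N + 1 ↦ ... ↦ M ↦ N; below M it agrees with
   [shift_from f N]. *)
Definition close_cycle (f : nat -> nat) (N M n : nat) : nat :=
  if n <? N then f n else if n <? M then S n else if n =? M then N else n.

Ltac nat_cases := repeat match goal with
  | |- context [?a <? ?b] => destruct (Nat.ltb_spec a b)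
  | |- context [?a =? ?b] => destruct (Nat.eqb_spec a b)
  | H : context [?a <? ?b] |- _ => destruct (Nat.ltb_spec a b)
  | H : context [?a =? ?b] |- _ => destruct (Nat.eqb_spec a b)
  end.

Lemma close_cycle_perm f N M : supported_perm f N -> N < M ->
  supported_perm (close_cycle f N M) (S M).
Proof.
  intros Hf HNM. pose proof (supported_perm_lt f N Hf) as Hlt.
  destruct Hf as [Hi [Hs Hid]]. unfold close_cycle. split; [|split].
  - intros a b. nat_cases; intros E; try lia;
      try (specialize (Hlt a ltac:(lia)); lia); try (specialize (Hlt b ltac:(lia)); lia).
    now apply Hi.
  - intros m. destruct (Nat.lt_ge_cases m N) as [Hm|Hm].
    + destruct (Hs m) as [n Hn].
      assert (n < N) by (apply Nat.nle_gt; intros Hge; rewrite Hid in Hn; lia).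
      exists n. nat_cases; lia.
    + destruct (Nat.eq_dec m N) as [->|HmN]; [exists M; nat_cases; lia|].
      destruct (Nat.le_gt_cases m M); [exists (pred m)|exists m]; nat_cases; lia.
  - intros n Hn. nat_cases; lia.
Qed.

Record stage := Stage { stage_fun : nat -> nat; stage_len : nat }.

Definition trial (k : nat) (s : stage) : nat -> nat :=
  if Nat.even k then stage_fun s else shift_from (stage_fun s) (stage_len s).

Definition extend (k : nat) (s : stage) (B : nat) : stage :=
  let M := Nat.max (S (stage_len s)) B in
  if Nat.even k then Stage (stage_fun s) M
  else Stage (close_cycle (stage_fun s) (stage_len s) M) (S M).

Definition stage_perm (s : stage) : Prop := supported_perm (stage_fun s) (stage_len s).

Lemma extend_perm k s B : stage_perm s -> stage_perm (extend k s B).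
Proof.
  intros Hs. unfold extend, stage_perm. destruct (Nat.even k); cbn [stage_fun stage_len].
  - destruct Hs as [Hi [Hsu Hid]]. repeat split; auto. intros n Hn; apply Hid; lia.
  - apply close_cycle_perm; [exact Hs|lia].
Qed.

Lemma extend_len k s B : stage_len s < stage_len (extend k s B) /\ B <= stage_len (extend k s B).
Proof. unfold extend; destruct (Nat.even k); cbn [stage_fun stage_len]; lia. Qed.

Lemma extend_fun_old k s B n : n < stage_len s -> stage_fun (extend k s B) n = stage_fun s n.
Proof.
  unfold extend, close_cycle; intros Hn.
  destruct (Nat.even k); cbn [stage_fun stage_len]; nat_cases; lia.
Qed.

Lemma extend_fun_trial k s B n : n < B -> stage_fun (extend k s B) n = trial k s n.
Proof.
  unfold extend, trial, close_cycle, shift_from; intros Hn.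
  destruct (Nat.even k); cbn [stage_fun stage_len]; nat_cases; lia.
Qed.

Lemma trial_injective k s : stage_perm s -> Injective (trial k s).
Proof.
  intros Hs. pose proof (supported_perm_lt _ _ Hs) as Hlt. destruct Hs as [Hi _].
  unfold trial, shift_from. destruct (Nat.even k); [exact Hi|].
  intros a b. nat_cases; intros E; try lia;
    try (specialize (Hlt a ltac:(lia)); lia); try (specialize (Hlt b ltac:(lia)); lia).
  now apply Hi.
Qed.

Lemma trial_even_surjective k s : Nat.even k = true -> stage_perm s -> Surjective (trial k s).
Proof. intros Hk [_ [Hs _]]. unfold trial; rewrite Hk; exact Hs. Qed.

Lemma trial_odd_misses k s : Nat.even k = false -> stage_perm s ->
  forall n, trial k s n <> stage_len s.
Proof.
  intros Hk Hs n. pose proof (supported_perm_lt _ _ Hs n) as Hlt.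
  unfold trial, shift_from; rewrite Hk. nat_cases; lia.
Qed.

Lemma trial_even_fixes_len k s : Nat.even k = true -> stage_perm s ->
  trial k s (stage_len s) = stage_len s.
Proof. intros Hk [_ [_ Hid]]. unfold trial; rewrite Hk. apply Hid, le_n. Qed.

Section Diagonal.

Variable bound : nat -> (nat -> nat) -> nat.

Fixpoint stage_at (k : nat) : stage :=
  match k with
  | 0 => Stage (fun n => n) 1
  | S k => extend k (stage_at k) (bound k (trial k (stage_at k)))
  end.

Definition diag (n : nat) : nat := stage_fun (stage_at n) n.

Lemma stage_at_perm k : stage_perm (stage_at k).
Proof.
  induction k as [|k IH]; simpl; [|now apply extend_perm].
  repeat split; [intros a b; auto|intros m; now exists m].
Qed.

Lemma stage_at_len_grows k : stage_len (stage_at k) < stage_len (stage_at (S k)).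
Proof. apply extend_len. Qed.

Lemma stage_at_len k : k < stage_len (stage_at k).
Proof.
  induction k as [|k IH]; [simpl; lia|]. pose proof (stage_at_len_grows k); lia.
Qed.

Lemma stage_at_len_mono j k : j <= k -> stage_len (stage_at j) <= stage_len (stage_at k).
Proof. induction 1 as [|k Hjk IH]; [lia|]. pose proof (stage_at_len_grows k); lia. Qed.

Lemma stage_at_stable j k n : j <= k -> n < stage_len (stage_at j) ->
  stage_fun (stage_at k) n = stage_fun (stage_at j) n.
Proof.
  intros Hjk Hn. induction Hjk as [|k Hjk IH]; [reflexivity|].
  pose proof (stage_at_len_mono j k Hjk).
  simpl. rewrite extend_fun_old; [exact IH|lia].
Qed.

Lemma diag_eq k n : n < stage_len (stage_at k) -> diag n = stage_fun (stage_at k) n.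
Proof.
  intros Hn. unfold diag. destruct (Nat.le_ge_cases n k) as [Hnk|Hkn].
  - symmetry; apply stage_at_stable; [exact Hnk|]. pose proof (stage_at_len n); lia.
  - apply stage_at_stable; assumption.
Qed.

Lemma diag_trial k n : n < bound k (trial k (stage_at k)) -> diag n = trial k (stage_at k) n.
Proof.
  intros Hn. rewrite (diag_eq (S k)); [apply extend_fun_trial, Hn|].
  pose proof (extend_len k (stage_at k) (bound k (trial k (stage_at k)))). simpl; lia.
Qed.

Lemma diag_injective : Injective diag.
Proof.
  intros a b E. set (k := Nat.max a b) in *. pose proof (stage_at_len k).
  rewrite (diag_eq k a), (diag_eq k b) in E by lia.
  destruct (stage_at_perm k) as [Hi _]. exact (Hi a b E).
Qed.

End Diagonal.

Local Open Scope R_scope.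

Definition lsum (a : nat -> R) (l : list nat) : R := fold_right (fun n s => a n + s) 0 l.

Lemma lsum_app a l1 l2 : lsum a (l1 ++ l2) = lsum a l1 + lsum a l2.
Proof. induction l1 as [|n l1 IH]; simpl; [|rewrite IH]; lra. Qed.

Lemma lsum_map a F l : lsum a (map F l) = lsum (fun n => a (F n)) l.
Proof. induction l as [|n l IH]; simpl; [|rewrite IH]; lra. Qed.

Lemma lsum_ge0 a l : (forall n, 0 <= a n) -> 0 <= lsum a l.
Proof. intros Ha; induction l as [|n l IH]; simpl; [lra|specialize (Ha n); lra]. Qed.

Lemma sum_f_R0_lsum a K : sum_f_R0 a K = lsum a (seq 0 (S K)).
Proof.
  induction K as [|K IH]; [simpl; lra|].
  rewrite seq_S, lsum_app, <- IH; simpl; lra.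
Qed.

Lemma lsum_le_incl a l L : (forall n, 0 <= a n) -> NoDup l -> incl l L ->
  lsum a l <= lsum a L.
Proof.
  intros Ha; revert L; induction l as [|x l IH]; intros L Hnd Hincl; simpl.
  - apply lsum_ge0, Ha.
  - destruct (in_split x L (Hincl x (in_eq x l))) as [L1 [L2 ->]].
    inversion_clear Hnd as [|? ? Hx Hnd'].
    assert (Hl : lsum a l <= lsum a (L1 ++ L2)).
    { apply IH; [exact Hnd'|]. intros y Hy.
      assert (Hy' := Hincl y (in_cons x y l Hy)).
      apply in_app_or in Hy'; apply in_or_app.
      destruct Hy' as [?|[->|?]]; tauto. }
    rewrite lsum_app in *; simpl; lra.
Qed.

Lemma sum_f_R0_le_Series a K : (forall n, 0 <= a n) -> ex_series a -> sum_f_R0 a K <= Series a.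
Proof.
  intros Ha Hs. apply growing_ineq.
  - intros n; simpl; specialize (Ha (S n)); lra.
  - apply is_series_Reals, Series_correct, Hs.
Qed.

Lemma ex_series_bounded a M : (forall n, 0 <= a n) -> (forall K, sum_f_R0 a K <= M) ->
  ex_series a /\ Series a <= M.
Proof.
  intros Ha HM.
  destruct (growing_cv (sum_f_R0 a)) as [l Hl].
  - intros n; simpl; specialize (Ha (S n)); lra.
  - exists M; intros x [K ->]; apply HM.
  - apply is_series_Reals in Hl.
    split; [exists l; exact Hl|]. rewrite (is_series_unique a l Hl).
    apply is_series_Reals, is_lim_seq_Reals in Hl.
    apply (is_lim_seq_le (sum_f_R0 a) (fun _ => M) l M); [exact HM|exact Hl|apply is_lim_seq_const].
Qed.

Lemma list_max_ge_In l x : In x l -> (x <= list_max l)%nat.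
Proof.
  intros Hx. apply (proj1 (Forall_forall _ l) (proj1 (list_max_le l _) (le_n _)) x Hx).
Qed.

Lemma Series_comp_injective a F : (forall n, 0 <= a n) -> Injective F -> ex_series a ->
  ex_series (fun n => a (F n)) /\ Series (fun n => a (F n)) <= Series a.
Proof.
  intros Ha HF Hs. apply ex_series_bounded; [intros n; apply Ha|intros K].
  set (l := map F (seq 0 (S K))).
  assert (Hmax : incl l (seq 0 (S (list_max l)))).
  { intros y Hy. apply in_seq. pose proof (list_max_ge_In l y Hy). lia. }
  rewrite sum_f_R0_lsum, <- lsum_map; fold l.
  apply Rle_trans with (lsum a (seq 0 (S (list_max l)))).
  - apply lsum_le_incl; [exact Ha| |exact Hmax].
    apply Injective_map_NoDup; [exact HF|apply seq_NoDup].
  - rewrite <- sum_f_R0_lsum; apply sum_f_R0_le_Series; assumption.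
Qed.

Lemma Series_comp_bijective a F : (forall n, 0 <= a n) -> Injective F -> Surjective F ->
  ex_series a -> ex_series (fun n => a (F n)) /\ Series (fun n => a (F n)) = Series a.
Proof.
  intros Ha HFi HFs Hs.
  destruct (functional_choice (fun m n => F n = m) HFs) as [H HH].
  destruct (Series_comp_injective a F Ha HFi Hs) as [HsF Hle].
  assert (HHi : Injective H) by (intros x y E; rewrite <- (HH x), <- (HH y), E; reflexivity).
  destruct (Series_comp_injective (fun n => a (F n)) H (fun n => Ha (F n)) HHi HsF) as [_ Hge].
  rewrite (Series_ext _ a) in Hge by (intros m; rewrite HH; reflexivity).
  split; [exact HsF|lra].
Qed.

Lemma Series_ge0 a : (forall n, 0 <= a n) -> ex_series a -> 0 <= Series a.
Proof.
  intros Ha Hs. apply Rle_trans with (sum_f_R0 a 0); [apply Ha|].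
  apply sum_f_R0_le_Series; assumption.
Qed.

Lemma ex_series_lincomb x y a b : ex_series a -> ex_series b ->
  ex_series (fun n => x * a n + y * b n).
Proof.
  intros Ha Hb. apply (ex_series_plus (V := R_NormedModule));
    apply (ex_series_scal_l (V := R_NormedModule)); assumption.
Qed.

Lemma Series_lincomb x y a b : ex_series a -> ex_series b ->
  Series (fun n => x * a n + y * b n) = x * Series a + y * Series b.
Proof.
  intros Ha Hb. rewrite Series_plus, !Series_scal_l; [reflexivity| |];
    apply (ex_series_scal_l (V := R_NormedModule)); assumption.
Qed.

Definition sqmod (g : nat -> C) (n : nat) : R := Cmod (g n) ^ 2.

Lemma sqmod_ge0 g n : 0 <= sqmod g n.
Proof. apply pow2_ge_0. Qed.

Lemma OmegaB_of_injective F : Injective F -> OmegaB F.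
Proof.
  intros HF. exists 1. intros g Hg.
  destruct (Series_comp_injective (sqmod g) F (sqmod_ge0 g) HF Hg) as [HgF Hle].
  split; [exact HgF|]. rewrite Rmult_1_l. apply sqrt_le_1_alt, Hle.
Qed.

Lemma Cmod_sub_sqr_le u v : Cmod (u - v)%C ^ 2 <= 2 * Cmod u ^ 2 + 2 * Cmod v ^ 2.
Proof.
  rewrite !Cmod2_alt. destruct u as [u1 u2], v as [v1 v2]; simpl.
  pose proof (pow2_ge_0 (u1 + v1)); pose proof (pow2_ge_0 (u2 + v2)); nra.
Qed.

(* The difference of the two sides is [Cmod (c * u - v) ^ 2]. Summed over the
   coordinates, this replaces the reverse triangle inequality in ℓ². *)
Lemma Cmod_sub_sqr_ge c u v :
  c * (1 - c) * Cmod u ^ 2 <= c * Cmod (u - v)%C ^ 2 + (1 - c) * Cmod v ^ 2.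
Proof.
  rewrite !Cmod2_alt. destruct u as [u1 u2], v as [v1 v2]; simpl.
  pose proof (pow2_ge_0 (c * u1 - v1)); pose proof (pow2_ge_0 (c * u2 - v2)); nra.
Qed.

Lemma l2norm_koopman_sub_ge F c w g : Injective F -> Surjective F -> 0 < c -> Cmod w <= c ->
  l2 g -> l2norm g = 1 -> 1 - c <= l2norm (fun n => (koopman F g n - w * g n)%C).
Proof.
  intros HFi HFs Hc Hw Hg Hg1.
  destruct (Rlt_le_dec c 1) as [Hc1|Hc1]; [|unfold l2norm; pose proof (sqrt_pos (Series
    (fun n => Cmod (koopman F g n - w * g n)%C ^ 2))); lra].
  assert (Sg : Series (sqmod g) = 1).
  { unfold l2norm in Hg1; fold (sqmod g) in Hg1.
    rewrite <- (pow2_sqrt (Series (sqmod g))), Hg1; [ring|].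
    apply Series_ge0; [apply sqmod_ge0|exact Hg]. }
  destruct (Series_comp_bijective (sqmod g) F (sqmod_ge0 g) HFi HFs Hg) as [HgF SgF].
  set (D n := Cmod (g (F n) - w * g n)%C ^ 2).
  assert (Hwg : forall n, Cmod (w * g n)%C ^ 2 = Cmod w ^ 2 * sqmod g n).
  { intros n; unfold sqmod; rewrite Cmod_mult; ring. }
  assert (HD : ex_series D).
  { apply (ex_series_le D (fun n => 2 * sqmod g (F n) + (2 * Cmod w ^ 2) * sqmod g n)).
    - intros n. change (norm (D n)) with (Rabs (D n)). rewrite Rabs_pos_eq by apply pow2_ge_0.
      rewrite Rmult_assoc, <- Hwg. apply Cmod_sub_sqr_le.
    - apply ex_series_lincomb; assumption. }
  assert (Hsum : Series (fun n => c * (1 - c) * sqmod g (F n))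
                 <= Series (fun n => c * D n + ((1 - c) * Cmod w ^ 2) * sqmod g n)).
  { apply Series_le; [|apply ex_series_lincomb; assumption].
    intros n; split; [apply Rmult_le_pos; [nra|apply sqmod_ge0]|].
    rewrite (Rmult_assoc (1 - c)), <- Hwg. apply Cmod_sub_sqr_ge. }
  rewrite Series_scal_l, Series_lincomb, SgF, Sg in Hsum by assumption.
  assert (HDge : (1 - c) ^ 2 <= Series D).
  { assert (Cmod w ^ 2 <= c ^ 2) by (pose proof (Cmod_ge_0 w); nra). nra. }
  rewrite <- (sqrt_pow2 (1 - c)) by lra. apply sqrt_le_1_alt, HDge.
Qed.

Lemma Glb_Rbar_lt E (e : R) : Rbar_lt (Glb_Rbar E) e -> exists r, E r /\ r < e.
Proof.
  intros H. apply NNPP; intros Hno.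
  assert (Hlb : Rbar_le e (Glb_Rbar E)).
  { apply Glb_Rbar_correct. intros r Hr. apply Rnot_lt_le. intros Hre. apply Hno. now exists r. }
  destruct (Glb_Rbar E); simpl in *; lra.
Qed.

Lemma Lub_Rbar_lt E (e : R) r : Rbar_lt (Lub_Rbar E) e -> E r -> r < e.
Proof.
  intros H Hr. pose proof (proj1 (Lub_Rbar_correct E) r Hr).
  destruct (Lub_Rbar E); simpl in *; lra.
Qed.

Lemma Cmod_le_add_sub a b : Cmod b <= Cmod a + Cmod (a - b)%C.
Proof.
  replace b with (a + - (a - b))%C at 1 by ring.
  eapply Rle_trans; [apply Cmod_triangle|rewrite Cmod_opp; lra].
Qed.

Lemma SpApEps_norm_ge eps F z : eps < 1 -> Injective F -> Surjective F ->
  SpApEps eps F z -> 1 - eps <= Cmod z.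
Proof.
  intros He HFi HFs Hz.
  apply Rnot_lt_le; intros Hlt.
  destruct (Hz (1 - eps - Cmod z)) as [w [Hw Hzw]]; [lra|].
  destruct (Glb_Rbar_lt _ _ Hw) as [r [[g [Hg [Hg1 ->]]] Hr]].
  assert (Hw1 : Cmod w <= 1 - eps) by (pose proof (Cmod_le_add_sub z w); lra).
  pose proof (l2norm_koopman_sub_ge F (1 - eps) w g HFi HFs ltac:(lra) Hw1 Hg Hg1).
  lra.
Qed.

Definition kron (m n : nat) : C := if Nat.eqb n m then 1%C else 0%C.

Lemma sum_sqmod_kron m K : sum_f_R0 (sqmod (kron m)) K = if Nat.leb m K then 1 else 0.
Proof.
  assert (Hs : forall n, sqmod (kron m) n = if Nat.eqb n m then 1 else 0).
  { intros n; unfold sqmod, kron. destruct (Nat.eqb n m); [rewrite Cmod_1|rewrite Cmod_0]; ring. }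
  induction K as [|K IH]; simpl; rewrite Hs; [destruct m; reflexivity|].
  rewrite IH. destruct (Nat.leb_spec m K), (Nat.leb_spec m (S K)), (Nat.eqb_spec (S K) m);
    try lia; ring.
Qed.

Lemma kron_unit m : l2 (kron m) /\ l2norm (kron m) = 1.
Proof.
  assert (Hs : is_series (sqmod (kron m)) 1).
  { apply is_series_Reals, is_lim_seq_Reals.
    apply (is_lim_seq_ext_loc (fun _ => 1)); [|apply is_lim_seq_const].
    exists m; intros K HK. rewrite sum_sqmod_kron. now destruct (Nat.leb_spec m K); [|lia]. }
  split; [now exists 1|]. unfold l2norm. fold (sqmod (kron m)).
  rewrite (is_series_unique _ _ Hs). apply sqrt_1.
Qed.

Lemma SpApEps_of_eigenvector eps F m z : 0 < eps ->
  (forall n, kron m (F n) = (z * kron m n)%C) -> SpApEps eps F z.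
Proof.
  intros He Heig d Hd. exists z. split.
  - destruct (kron_unit m) as [Hl2 Hn1].
    assert (H0 : l2norm (fun n => (koopman F (kron m) n - z * kron m n)%C) = 0).
    { unfold l2norm, koopman. rewrite (Series_ext _ (fun n => 0 * 0)).
      - rewrite Series_scal_l, Rmult_0_l. apply sqrt_0.
      - intros n. rewrite Heig. replace (z * kron m n - z * kron m n)%C with (RtoC 0) by ring.
        rewrite Cmod_0; ring. }
    assert (Hle : Rbar_le (sigma_inf F z) 0).
    { apply Glb_Rbar_correct. exists (kron m). auto. }
    destruct (sigma_inf F z); simpl in *; lra.
  - replace (z - z)%C with (RtoC 0) by ring. now rewrite Cmod_0.
Qed.

Lemma SpApEps_fixed_point eps F m : 0 < eps -> Injective F -> F m = m -> SpApEps eps F 1%C.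
Proof.
  intros He HF Hm. apply (SpApEps_of_eigenvector eps F m); [exact He|]. intros n.
  unfold kron. destruct (Nat.eqb_spec (F n) m), (Nat.eqb_spec n m); subst; try ring.
  - exfalso. apply n0, HF. congruence.
  - congruence.
Qed.

Lemma SpApEps_missed_point eps F m : 0 < eps -> (forall n, F n <> m) -> SpApEps eps F 0%C.
Proof.
  intros He HF. apply (SpApEps_of_eigenvector eps F m); [exact He|]. intros n.
  unfold kron. destruct (Nat.eqb_spec (F n) m); [now exfalso; apply (HF n)|ring].
Qed.

Lemma distC_lt a B e : (exists b, B b) -> distC a B < e -> exists b, B b /\ Cmod (a - b)%C < e.
Proof.
  intros [b0 Hb0] H. unfold distC in H.
  set (E r := exists b, B b /\ r = Cmod (a - b)%C) in H.
  assert (Hup : Rbar_le (Glb_Rbar E) (Cmod (a - b0)%C))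
    by (apply Glb_Rbar_correct; now exists b0).
  assert (Hlo : Rbar_le 0 (Glb_Rbar E))
    by (apply Glb_Rbar_correct; intros r [b [_ ->]]; apply Cmod_ge_0).
  destruct (Glb_Rbar_lt E e) as [r [[b [Hb ->]] Hr]]; [|now exists b].
  destruct (Glb_Rbar E); simpl in *; lra.
Qed.

Lemma hausdorff_lt_near_l X Y (e : R) a : Rbar_lt (hausdorff X Y) e -> X a -> (exists b, Y b) ->
  exists b, Y b /\ Cmod (a - b)%C < e.
Proof.
  intros H Ha HY. apply distC_lt; [exact HY|].
  apply (Lub_Rbar_lt _ _ _ H). left; now exists a.
Qed.

Lemma hausdorff_lt_near_r X Y (e : R) b : Rbar_lt (hausdorff X Y) e -> Y b -> (exists a, X a) ->
  exists a, X a /\ Cmod (b - a)%C < e.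
Proof.
  intros H Hb HX. apply distC_lt; [exact HX|].
  apply (Lub_Rbar_lt _ _ _ H). right; now exists b.
Qed.

Section Adversary.

Variables (eps : R) (Gam : nat -> GenAlg) (rate : (nat -> nat) -> nat).
Hypothesis eps_range : 0 < eps < 1.
Hypothesis rate_spec : forall F, OmegaB F -> forall n, (rate F <= n)%nat ->
  Rbar_lt (hausdorff (alg_Gam (Gam n) F) (SpApEps eps F)) ((1 - eps) / 4).

Let index k F := Nat.max (rate F) k.
Let query_bound k F := S (list_max (alg_Lam (Gam (index k F)) F)).
Let G := diag query_bound.
Let T k := trial k (stage_at query_bound k).

Lemma trial_OmegaB k : OmegaB (T k).
Proof. apply OmegaB_of_injective, trial_injective, stage_at_perm. Qed.

Lemma diag_OmegaB : OmegaB G.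
Proof. apply OmegaB_of_injective, diag_injective. Qed.

Lemma alg_diag_iff_trial k z :
  alg_Gam (Gam (index k (T k))) G z <-> alg_Gam (Gam (index k (T k))) (T k) z.
Proof.
  apply (alg_cons _ _ _ (trial_OmegaB k) diag_OmegaB). intros j Hj.
  apply diag_trial. apply Nat.lt_succ_r, list_max_ge_In, Hj.
Qed.

Lemma alg_diag_close k : (rate G <= k)%nat ->
  Rbar_lt (hausdorff (alg_Gam (Gam (index k (T k))) G) (SpApEps eps G)) ((1 - eps) / 4).
Proof. intros Hk. apply rate_spec; [exact diag_OmegaB|unfold index; lia]. Qed.

Lemma alg_trial_close k :
  Rbar_lt (hausdorff (alg_Gam (Gam (index k (T k))) (T k)) (SpApEps eps (T k))) ((1 - eps) / 4).
Proof. apply rate_spec; [exact (trial_OmegaB k)|apply Nat.le_max_l]. Qed.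

Lemma SpApEps_diag_nonempty : exists y, SpApEps eps G y.
Proof. exists 1%C. apply (SpApEps_fixed_point _ _ 0); [lra|apply diag_injective|reflexivity]. Qed.

Lemma SpApEps_diag_meets_small_disc : exists y, SpApEps eps G y /\ Cmod y < (1 - eps) / 2.
Proof.
  set (k := S (2 * rate G)).
  assert (Hk : Nat.even k = false)
    by (unfold k; rewrite Nat.even_succ, <- Nat.negb_even, Nat.even_mul; reflexivity).
  assert (H0 : SpApEps eps (T k) 0%C).
  { apply (SpApEps_missed_point _ _ (stage_len (stage_at query_bound k))); [lra|].
    apply trial_odd_misses; [exact Hk|apply stage_at_perm]. }
  destruct (hausdorff_lt_near_r _ _ _ _ (alg_trial_close k) H0
              (proj1 (alg_out _ _ (trial_OmegaB k)))) as [x [Hx Hx0]].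
  destruct (hausdorff_lt_near_l _ _ _ x (alg_diag_close k ltac:(unfold k; lia))
              (proj2 (alg_diag_iff_trial k x) Hx) SpApEps_diag_nonempty) as [y [Hy Hxy]].
  exists y; split; [exact Hy|].
  pose proof (Cmod_le_add_sub 0 x). pose proof (Cmod_le_add_sub x y). rewrite Cmod_0 in *. lra.
Qed.

Lemma SpApEps_diag_avoids_small_disc y : SpApEps eps G y -> (1 - eps) / 2 < Cmod y.
Proof.
  intros Hy. set (k := (2 * rate G)%nat).
  assert (Hk : Nat.even k = true) by (unfold k; rewrite Nat.even_mul; reflexivity).
  assert (Hperm := stage_at_perm query_bound k).
  destruct (hausdorff_lt_near_r _ _ _ y (alg_diag_close k ltac:(unfold k; lia)) Hy
              (proj1 (alg_out _ _ diag_OmegaB))) as [x [Hx Hyx]].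
  assert (HTne : exists y1, SpApEps eps (T k) y1).
  { exists 1%C. apply (SpApEps_fixed_point _ _ (stage_len (stage_at query_bound k))); [lra| |].
    - apply trial_injective, Hperm.
    - apply trial_even_fixes_len; assumption. }
  destruct (hausdorff_lt_near_l _ _ _ x (alg_trial_close k)
              (proj1 (alg_diag_iff_trial k x) Hx) HTne) as [y1 [Hy1 Hxy1]].
  assert (Hfar : 1 - eps <= Cmod y1).
  { apply (SpApEps_norm_ge eps (T k)); [lra|apply trial_injective, Hperm| |exact Hy1].
    apply trial_even_surjective; assumption. }
  pose proof (Cmod_le_add_sub y x). pose proof (Cmod_le_add_sub x y1). lra.
Qed.

End Adversary.

Theorem mainTheorem9 : forall eps : R, 0 < eps < 1 ->
  ~ exists Gam : nat -> GenAlg,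
      forall F : nat -> nat, OmegaB F ->
        hausdorff_cvg (fun n => alg_Gam (Gam n) F) (SpApEps eps F).
Proof.
  intros eps Heps [Gam HG].
  assert (Hd : 0 < (1 - eps) / 4) by lra.
  destruct (functional_choice (fun F N => OmegaB F -> forall n, (N <= n)%nat ->
    Rbar_lt (hausdorff (alg_Gam (Gam n) F) (SpApEps eps F)) ((1 - eps) / 4))) as [rate Hrate].
  { intros F. destruct (classic (OmegaB F)) as [HF|HF].
    - destruct (HG F HF _ Hd) as [N HN]. exists N. intros _; exact HN.
    - exists 0%nat. intros HF'; contradiction. }
  destruct (SpApEps_diag_meets_small_disc eps Gam rate Heps Hrate) as [y [Hy Hsmall]].
  pose proof (SpApEps_diag_avoids_small_disc eps Gam rate Heps Hrate y Hy). lra.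
Qed.
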